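(* Let $G=(V,E)$ be a directed graph with $n=|V|$, $h>0$, and $1\le\alpha\le\log n$. For any vertices $u,v$ with $\overline{\mathrm{dist}}(u,v)\le 2h$, $$\sum_{b\in V}\min\{M_h^\alpha(u,b),M_h^\alpha(v,b)\}\ge 2^{-8\alpha}.$$
   Context: $G$ has positive integer edge lengths; $\mathrm{dist}$ is directed shortest-path distance and $\overline{\mathrm{dist}}(u,v)=\mathrm{dist}(u,v)+\mathrm{dist}(v,u)$. Exponential weights: $w_h^\alpha(u,v)=1$ if $u=v$; $=2^{-\alpha\overline{\mathrm{dist}}(u,v)/h}$ if $u\neq v$ and $\overline{\mathrm{dist}}(u,v)\le\frac{2h\log_2 n}{\alpha}$; $=0$ otherwise. $w_h^\alpha(u)=\sum_{b\in V}w_h^\alpha(u,b)$ and the mixing factor is $M_h^\alpha(u,v)=w_h^\alpha(u,v)/w_h^\alpha(u)$. *)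

From mathcomp Require Import all_boot all_order all_algebra.
From mathcomp Require Import all_classical all_reals all_analysis.
Set Implicit Arguments. Unset Strict Implicit. Unset Printing Implicit Defensive.
Import Order.TTheory GRing.Theory Num.Theory.
Local Open Scope classical_set_scope.
Local Open Scope ring_scope.

(* A directed graph on a finite vertex type V: edge relation E and edge lengths
   len (required to be positive integers on edges, see [pos_lengths]). *)
Definition pos_lengths (V : finType) (E : rel V) (len : V -> V -> nat) : Prop :=
  forall x y, E x y -> (0 < len x y)%N.

(* A walk from u to v: vertex sequence p following edges, starting after u, ending at v. *)
Definition walk (V : finType) (E : rel V) (u v : V) (p : seq V) : bool :=
  path E u p && (last u p == v).

Definition walk_len (V : finType) (len : V -> V -> nat) (u : V) (p : seq V) : nat :=
  sumn (pairmap len u p).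

Definition dist (R : realType) (V : finType) (E : rel V) (len : V -> V -> nat)
  (u v : V) : \bar R :=
  ereal_inf [set ((walk_len len u p)%:R)%:E | p in [set p | walk E u v p]].

Definition rdist (R : realType) (V : finType) (E : rel V) (len : V -> V -> nat)
  (u v : V) : \bar R :=
  (dist R E len u v + dist R E len v u)%E.

Definition log2 (R : realType) (x : R) : R := ln x / ln 2.

Definition wgt (R : realType) (V : finType) (E : rel V) (len : V -> V -> nat)
  (h alpha : R) (u v : V) : R :=
  if u == v then 1
  else if (rdist R E len u v <= (2 * h * log2 (#|V|%:R) / alpha)%:E)%E
       then (2 : R) `^ (- alpha * fine (rdist R E len u v) / h)
       else 0.

Definition wgt_tot (R : realType) (V : finType) (E : rel V) (len : V -> V -> nat)
  (h alpha : R) (u : V) : R :=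
  \sum_(b : V) wgt E len h alpha u b.

Definition mix (R : realType) (V : finType) (E : rel V) (len : V -> V -> nat)
  (h alpha : R) (u v : V) : R :=
  wgt E len h alpha u v / wgt_tot E len h alpha u.

(* Write t = 2^(-2 alpha) and eps = 2^(2 alpha - 2 log n).  If rdist(x,y) <= 2h, the
   triangle inequality for round-trip distances gives w(y,b) >= t w(x,b) for every b
   within D - 2h of x (D the truncation radius), while every b farther from x has
   w(x,b) <= eps; so w(y,b) >= t w(x,b) - eps for all b.  Used in both directions, this
   bounds min(M(u,b), M(v,b)) below by (t (w(u,b) + w(v,b))/2 - eps) / (w(u) + w(v)), and
   summing over b gives (t - n eps)/2 = (t - 2^(2 alpha - log n))/2 >= t^4 = 2^(-8 alpha)
   as soon as log n >= 6 alpha.  When log n <= 6 alpha the single term b = u suffices: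
   M(u,u) and M(v,u) are both at least t/n >= 2^(-8 alpha). *)

From mathcomp Require Import all_boot all_order all_algebra.
From mathcomp Require Import all_classical all_reals all_analysis.
From mathcomp Require Import ring lra.
Import Order.TTheory GRing.Theory Num.Theory.
Local Open Scope ring_scope.
Set Implicit Arguments. Unset Strict Implicit.

Section PowersOfTwo.
Variable R : realType.

Lemma ler_powR2 (x y : R) : x <= y -> 2 `^ x <= 2 `^ y.
Proof. by apply: ler_powR; rewrite ler1n. Qed.

Lemma powR2_le1 (x : R) : x <= 0 -> 2 `^ x <= 1.
Proof. by move=> /ler_powR2; rewrite powRr0. Qed.

Lemma powR2D (x y : R) : 2 `^ (x + y) = 2 `^ x * 2 `^ y.
Proof. by rewrite powRD // pnatr_eq0 implybT. Qed.

Lemma powR2_log2 (x : R) : 0 < x -> 2 `^ log2 x = x.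
Proof.
move=> x_gt0; have ln2_neq0 : ln (2 : R) != 0 by rewrite gt_eqF // ln_gt0 // ltr1n.
by rewrite /powR pnatr_eq0 /= /log2 divfK // lnK.
Qed.

End PowersOfTwo.

Lemma le_min_div_add (R : realFieldType) (m a b x y : R) :
  m <= a -> m <= b -> 0 <= a -> 0 <= b -> 0 < x -> 0 < y ->
  m / (x + y) <= Num.min (a / x) (b / y).
Proof.
move=> ma mb a_ge0 b_ge0 x_gt0 y_gt0; have xy_gt0 : 0 < x + y by rewrite addr_gt0.
rewrite le_min; apply/andP; have [m_le0|m_gt0] := lerP m 0.
  have m_div_le0 : m / (x + y) <= 0 by rewrite pmulr_lle0 ?invr_gt0.
  by split; apply: le_trans m_div_le0 _; apply: divr_ge0 => //; apply: ltW.
have m_ge0 := ltW m_gt0.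
have xy_inv_ge0 : 0 <= (x + y)^-1 by rewrite invr_ge0 ltW.
by split; apply: ler_pM => //; rewrite lef_pV2 ?posrE // ?lerDl ?lerDr ltW.
Qed.

Section Distance.
Variables (R : realType) (V : finType) (E : rel V) (len : V -> V -> nat).
Local Notation dist := (dist R E len).
Local Notation rdist := (rdist R E len).

Lemma dist_le_walk_len x y p : walk E x y p -> (dist x y <= (walk_len len x p)%:R%:E)%E.
Proof. by move=> xy_p; apply: ereal_inf_lbound; exists p. Qed.

Lemma dist_pinfty_or_attained x y :
  dist x y = +oo%E \/ exists2 p, walk E x y p & dist x y = (walk_len len x p)%:R%:E.
Proof.
have [[p0 xy_p0]|no_walk] := pselect (exists p, walk E x y p); last first.
  by left; apply/ereal_inf_pinfty => z [p xy_p _]; case: no_walk; exists p.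
right; pose P m := `[< exists2 p, walk E x y p & walk_len len x p = m >].
have P_ex : exists m, P m by exists (walk_len len x p0); apply/asboolP; exists p0.
case: (ex_minnP P_ex) => _ /asboolP[p xy_p <-] m_min.
exists p => //; apply/eqP; rewrite eq_le dist_le_walk_len //=.
apply: le_ereal_inf_tmp => _ [q /= xy_q <-].
by rewrite lee_fin ler_nat; apply: m_min; apply/asboolP; exists q.
Qed.

Lemma dist_ge0 x y : (0 <= dist x y)%E.
Proof. by case: (dist_pinfty_or_attained x y) => [->|[p _ ->]]; rewrite ?leey. Qed.

Lemma dist_xx x : dist x x = 0%E.
Proof.
apply/eqP; rewrite eq_le dist_ge0 andbT.
by apply: (@dist_le_walk_len x x [::]); rewrite /walk eqxx.
Qed.

Lemma dist_triangle x y z : (dist x z <= dist x y + dist y z)%E.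
Proof.
case: (dist_pinfty_or_attained x y) => [->|[p xy_p ->]].
  by rewrite addye ?leey // gt_eqF // (lt_le_trans _ (dist_ge0 y z)) ?ltNy0.
case: (dist_pinfty_or_attained y z) => [->|[q yz_q ->]]; first by rewrite addey ?leey.
have xz_pq : walk E x z (p ++ q).
  by move: xy_p yz_q; rewrite /walk cat_path last_cat => /andP[-> /eqP->] /andP[-> ->].
move: (dist_le_walk_len xz_pq); rewrite /walk_len pairmap_cat sumn_cat natrD EFinD.
by case/andP: xy_p => _ /eqP->.
Qed.

Lemma rdist_ge0 x y : (0 <= rdist x y)%E.
Proof. by rewrite adde_ge0 ?dist_ge0. Qed.

Lemma rdist_fin_num x y r : (rdist x y <= r%:E)%E -> rdist x y \is a fin_num.
Proof. by move=> xy_le; rewrite ge0_fin_numE ?rdist_ge0 // (le_lt_trans xy_le) ?ltry. Qed.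

Lemma rdistC x y : rdist x y = rdist y x.
Proof. exact: addeC. Qed.

Lemma rdist_xx x : rdist x x = 0%E.
Proof. by rewrite /rdist dist_xx adde0. Qed.

Lemma rdist_triangle x y z : (rdist x z <= rdist x y + rdist y z)%E.
Proof.
rewrite /rdist addeACA (addeC (dist y x)).
exact: leeD (dist_triangle x y z) (dist_triangle z y x).
Qed.

End Distance.

Section Weights.
Variables (R : realType) (V : finType) (E : rel V) (len : V -> V -> nat) (h alpha : R).
Hypotheses (h_gt0 : 0 < h) (alpha_gt0 : 0 < alpha).
Local Notation rdist := (rdist R E len).
Local Notation wgt := (wgt E len h alpha).
Local Notation wgt_tot := (wgt_tot E len h alpha).
Local Notation mix := (mix E len h alpha).
Local Notation L := (log2 (#|V|%:R : R)).
Local Notation radius := (2 * h * L / alpha).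
Local Notation decay r := (2 `^ (- alpha * r / h)).

Lemma ler_decay (r s : R) : r <= s -> decay s <= decay r.
Proof. by move=> rs; apply: ler_powR2; rewrite !mulNr lerN2 ler_pM2r ?invr_gt0 // ler_pM2l. Qed.

Lemma decay_le1 (r : R) : 0 <= r -> decay r <= 1.
Proof. by move=> /ler_decay; rewrite mulr0 mul0r powRr0. Qed.

Lemma wgt_ge0 x y : 0 <= wgt x y.
Proof. by rewrite /wgt; case: ifP => // _; case: ifP => // _; apply: powR_ge0. Qed.

Lemma wgt_le1 x y : wgt x y <= 1.
Proof.
rewrite /wgt; case: ifP => // _; case: ifP => // _.
exact/decay_le1/fine_ge0/rdist_ge0.
Qed.

Lemma wgt_ge_rdist x y (r : R) :
  (rdist x y <= r%:E)%E -> r <= radius -> decay r <= wgt x y.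
Proof.
move=> xy_le r_le; rewrite /wgt; case: eqP => _.
  by apply: decay_le1; rewrite -lee_fin (le_trans _ xy_le) ?rdist_ge0.
rewrite (le_trans xy_le) ?lee_fin //; apply: ler_decay.
by rewrite -lee_fin fineK ?(rdist_fin_num xy_le).
Qed.

Lemma wgt_le_rdist x y (r : R) :
  (r%:E <= rdist x y)%E -> wgt x y <= decay r.
Proof.
move=> le_xy; rewrite /wgt; case: eqP => [xy|_].
  by move: le_xy; rewrite xy rdist_xx lee_fin => /ler_decay; rewrite mulr0 mul0r powRr0.
case: ifP => [xy_le|_]; last exact: powR_ge0.
by apply: ler_decay; rewrite -lee_fin fineK ?(rdist_fin_num xy_le).
Qed.

Lemma wgt_transfer x y b : (rdist x y <= (2 * h)%:E)%E ->
  2 `^ (- (2 * alpha)) * wgt x b - 2 `^ (2 * alpha - 2 * L) <= wgt y b.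
Proof.
move=> xy_le; have h_neq0 := lt0r_neq0 h_gt0; have alpha_neq0 := lt0r_neq0 alpha_gt0.
have t_le1 : 2 `^ (- (2 * alpha)) <= 1 :> R.
  by apply: powR2_le1; rewrite oppr_le0 mulr_ge0 // ltW.
have [xb_near|xb_far] := leP (rdist x b) (radius - 2 * h)%:E.
  have xb_eq : rdist x b = (fine (rdist x b))%:E by rewrite fineK ?(rdist_fin_num xb_near).
  set rho := fine (rdist x b) in xb_eq.
  have yb_le : (rdist y b <= (2 * h + rho)%:E)%E.
    by apply: le_trans (rdist_triangle _ _ _ y x b) _; rewrite EFinD -xb_eq rdistC leeD.
  have rho_le : 2 * h + rho <= radius by move: xb_near; rewrite xb_eq lee_fin; lra.
  apply: le_trans (wgt_ge_rdist yb_le rho_le).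
  have -> : - alpha * (2 * h + rho) / h = - (2 * alpha) + - alpha * rho / h by field.
  rewrite lerBlDr; apply: ler_wpDr; first exact: powR_ge0.
  rewrite powR2D; apply: ler_wpM2l; first exact: powR_ge0.
  by apply: wgt_le_rdist; rewrite xb_eq.
have wxb_le : wgt x b <= 2 `^ (2 * alpha - 2 * L).
  have -> : 2 * alpha - 2 * L = - alpha * (radius - 2 * h) / h.
    by field; apply/andP.
  exact/wgt_le_rdist/ltW.
apply: le_trans (wgt_ge0 y b); rewrite subr_le0 (le_trans _ wxb_le) //.
by rewrite ler_piMl ?wgt_ge0.
Qed.

Lemma wgt_tot_ge1 x : 1 <= wgt_tot x.
Proof.
rewrite /wgt_tot (bigD1 x) //= {1}/wgt eqxx lerDl sumr_ge0 // => y _.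
exact: wgt_ge0.
Qed.

Lemma wgt_tot_le_card x : wgt_tot x <= #|V|%:R.
Proof. by rewrite -[leRHS]mulr1n -sumr_const; apply: ler_sum => y _; apply: wgt_le1. Qed.

Lemma mix_ge0 x y : 0 <= mix x y.
Proof. by rewrite divr_ge0 ?wgt_ge0 // (le_trans ler01 (wgt_tot_ge1 x)). Qed.

Lemma mix_ge x y (c : R) : 0 <= c -> c <= wgt x y -> c / #|V|%:R <= mix x y.
Proof.
move=> c_ge0 c_le; have W_gt0 := lt_le_trans ltr01 (wgt_tot_ge1 x).
apply: ler_pM; rewrite ?invr_ge0 ?(le_trans (ltW W_gt0) (wgt_tot_le_card x)) //.
by rewrite lef_pV2 ?posrE ?wgt_tot_le_card // (lt_le_trans W_gt0 (wgt_tot_le_card x)).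
Qed.

Lemma sum_min_mix_ge u v : (rdist u v <= (2 * h)%:E)%E ->
  (2 `^ (- (2 * alpha)) - #|V|%:R * 2 `^ (2 * alpha - 2 * L)) / 2 <=
    \sum_b Num.min (mix u b) (mix v b).
Proof.
move=> uv_le; have vu_le : (rdist v u <= (2 * h)%:E)%E by rewrite rdistC.
set t := 2 `^ _; set eps := 2 `^ _.
have t_ge0 : 0 <= t := powR_ge0 _ _; have eps_ge0 : 0 <= eps := powR_ge0 _ _.
have t_le1 : t <= 1 by apply: powR2_le1; rewrite oppr_le0 mulr_ge0 // ltW.
set S := wgt_tot u + wgt_tot v.
have S_ge2 : 2 <= S by rewrite [2]/(1 + 1) lerD ?wgt_tot_ge1.
have pointwise b : (t * (wgt u b + wgt v b) / 2 - eps) / S <= Num.min (mix u b) (mix v b).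
  have := wgt_transfer b uv_le; have := wgt_transfer b vu_le; rewrite -/t -/eps.
  have := wgt_ge0 u b; have := wgt_ge0 v b => vb_ge0 ub_ge0 vu_transfer uv_transfer.
  apply: le_min_div_add; rewrite ?(lt_le_trans ltr01 (wgt_tot_ge1 _)) //; nra.
apply: le_trans (ler_sum _ (fun b _ => pointwise b)).
rewrite -mulr_suml sumrB sumr_const -mulr_suml -mulr_sumr big_split /= -/S.
rewrite -mulr_natl ler_pdivlMr ?(lt_le_trans _ S_ge2) //.
have n_eps_ge0 : 0 <= #|V|%:R * eps by rewrite mulr_ge0.
nra.
Qed.

Hypothesis alpha_le_log : alpha <= L.

Lemma wgt_ge_close x y : (rdist x y <= (2 * h)%:E)%E -> 2 `^ (- (2 * alpha)) <= wgt x y.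
Proof.
move=> xy_le; have -> : - (2 * alpha) = - alpha * (2 * h) / h by field; exact: lt0r_neq0.
apply: wgt_ge_rdist xy_le _.
by rewrite -mulrA ler_peMr ?mulr_ge0 ?(ltW h_gt0) // ler_pdivlMr // mul1r.
Qed.

Lemma sum_min_mix_ge_self u v : (rdist u v <= (2 * h)%:E)%E ->
  2 `^ (- (2 * alpha)) / #|V|%:R <= \sum_b Num.min (mix u b) (mix v b).
Proof.
move=> uv_le; have t_ge0 : 0 <= 2 `^ (- (2 * alpha)) :> R := powR_ge0 _ _.
rewrite (bigD1 u) //= -[leLHS]addr0; apply: lerD; last first.
  by apply: sumr_ge0 => b _; rewrite le_min !mix_ge0.
have uu_le : (rdist u u <= (2 * h)%:E)%E by rewrite rdist_xx lee_fin mulr_ge0 // ltW.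
have vu_le : (rdist v u <= (2 * h)%:E)%E by rewrite rdistC.
by rewrite le_min !mix_ge ?wgt_ge_close.
Qed.

End Weights.

Unset Implicit Arguments.

Theorem lemma3p12 (R : realType) (V : finType) (E : rel V) (len : V -> V -> nat)
  (h alpha : R) (u v : V) :
  pos_lengths E len ->
  0 < h ->
  1 <= alpha -> alpha <= log2 (#|V|%:R) ->
  (rdist R E len u v <= (2 * h)%:E)%E ->
  (2 : R) `^ (- (8 * alpha)) <=
    \sum_(b : V) Num.min (mix E len h alpha u b) (mix E len h alpha v b).
Proof.
move=> _ h_gt0 alpha_ge1 alpha_le_log uv_le.
have alpha_gt0 : 0 < alpha := lt_le_trans ltr01 alpha_ge1.
have card_eq : #|V|%:R = 2 `^ log2 #|V|%:R :> R.
  by rewrite powR2_log2 // ltr0n; apply/card_gt0P; exists u.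
have [L_le|L_gt] := lerP (log2 (#|V|%:R : R)) (6 * alpha).
  apply: le_trans (sum_min_mix_ge_self h_gt0 alpha_gt0 alpha_le_log uv_le).
  rewrite {1}card_eq ler_pdivlMr ?powR_gt0 // -powR2D; apply: ler_powR2; lra.
apply: le_trans (sum_min_mix_ge h_gt0 alpha_gt0 uv_le).
set t := 2 `^ (- (2 * alpha)).
have t_ge0 : 0 <= t := powR_ge0 _ _.
have t_quarter : t * 4 <= 1.
  have : t * 2 `^ 2 <= 1 by rewrite -powR2D; apply: powR2_le1; lra.
  by rewrite powR_mulrn // expr2; lra.
have card_eps_le : #|V|%:R * 2 `^ (2 * alpha - 2 * log2 #|V|%:R) <= t * t.
  by rewrite {1}card_eq /t -!powR2D; apply: ler_powR2; lra.
have -> : 2 `^ (- (8 * alpha)) = t * t * (t * t) by rewrite /t -!powR2D; congr powR; lra.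
have t_sq_le : t * t <= t / 4 by nra.
have t_4_le : t * t * (t * t) <= t * t / 16 by nra.
lra.
Qed.
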